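(* Under the Standing Setup and Assumption (G) described in the context, $$\mathcal{E}(PC_{f,\mathcal{T}})=\sum_{\alpha\in\mathbf{F}_2^{k2^{s-1}}}\ \prod_{c=0}^{2^s-1}\mathcal{E}\big(f\oplus\varphi_{\chi(c,\alpha)}\big).$$
   Context: Standing Setup. $f:\mathbf{F}_2^n\to\mathbf{F}_2$ is a Boolean function. $\mathbf{x}_1,\ldots,\mathbf{x}_n$ are binary sequences, $\mathbf{x}_j=(x_j(t))_{t\ge0}$, with $\mathbf{x}_j$ periodic of period $T_j$, i.e. $x_j(t)=x_j(t \bmod T_j)$. Let $s\ge1$ and integers $0=\ell_1<\ell_2<\cdots<\ell_{s+1}=k\le n$; variable $j$ belongs to block $i$ if $\ell_i<j\le\ell_{i+1}$. For $1\le i\le s$, $M_i=q_i\,\mathrm{lcm}(T_{\ell_i+1},\ldots,T_{\ell_{i+1}})$ with $q_i$ a positive integer. For $c=\sum_{i=1}^s c_i2^{i-1}\in\{0,\ldots,2^s-1\}$ with $c_i\in\{0,1\}$, put $\tau_c=\sum_{i=1}^s c_iM_i$, and $\mathcal{T}=\{\tau_c\}$. The parity-check sequence is $PC_{f,\mathcal{T}}(t)=\bigoplus_{c=0}^{2^s-1} f\big(x_1(t+\tau_c),\ldots,x_n(t+\tau_c)\big)$. The bias of a Boolean function $h$ of $m$ variables is $\mathcal{E}(h)=2^{-m}\sum_{x\in\mathbf{F}_2^m}(-1)^{h(x)}$. The bias $\mathcal{E}(PC_{f,\mathcal{T}})$ is the bias of $PC_{f,\mathcal{T}}(t)$ (for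 a fixed $t\ge0$) viewed as a Boolean function of the $T_1+\cdots+T_n$ bits $x_j(0),\ldots,x_j(T_j-1)$, $1\le j\le n$; equivalently $\mathbb{E}[(-1)^{PC_{f,\mathcal{T}}(t)}]$ when these bits are independent and uniform. Assumption (G): (i) for every $j$ with $k<j\le n$, the $2^s$ integers $\tau_c$ are pairwise incongruent modulo $T_j$; (ii) for every $i\in\{1,\ldots,s\}$ and every $j$ in block $i$, the $2^{s-1}$ integers $\sum_{l\ne i}c_lM_l$ ($c_l\in\{0,1\}$) are pairwise incongruent modulo $T_j$. For $\beta\in\mathbf{F}_2^n$, $\varphi_\beta$ is the linear function $x\mapsto\beta\cdot x$. The map $\chi$: write $\alpha\in\mathbf{F}_2^{k2^{s-1}}$ as $\alpha=(\alpha_1,\ldots,\alpha_k)$ with $\alpha_j=(\alpha_{j,0},\ldots,\alpha_{j,2^{s-1}-1})\in\mathbf{F}_2^{2^{s-1}}$. For $0\le c<2^s$ define $\chi(c,\alpha)=(\chi_1(c,\alpha),\ldots,\chi_k(c,\alpha),0,\ldots,0)\in\mathbf{F}_2^n$ (last $n-k$ coordinates zero), where for $j$ in block $i$, $\chi_j(c,\alpha)=\alpha_{j,m}$ with $m$ the integer obtained from the binary expansion of $c$ by deleting the bit $c_i$ (the bit of weight $2^{i-1}$); explicitly, if $c=2^iq+c_i2^{i-1}+r$ with $0\le r<2^{i-1}$, then $m=2^{i-1}q+r$. *)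

(* F_2 is modelled by bool (addition = xor = addb). *)
From HB Require Import structures.
From mathcomp Require Import all_boot all_order all_algebra.
Unset Printing Implicit Defensive.
Import GRing.Theory Num.Theory.

Definition bias {I : finType} (h : {ffun I -> bool} -> bool) : rat :=
  ((2%:R : rat) ^+ #|I|)^-1 * \sum_(x : {ffun I -> bool}) (-1) ^+ (h x).

Definition linf n (beta x : {ffun 'I_n -> bool}) : bool :=
  \big[addb/false]_(i < n) (beta i && x i).

(* Reading a bool-valued finite function at a natural index (false if out of range). *)
Definition getb {N} (g : {ffun 'I_N -> bool}) (m : nat) : bool :=
  if @insub nat (fun x => x < N) 'I_N m is Some i then g i else false.

(* Bit i (0-based) of c, i.e. c_{i+1} in the paper's 1-based notation. *)
Definition bitn (i c : nat) : bool := odd (c %/ 2 ^ i).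

(* The variable set: bits x_j(0..T_j-1), j < n (0-based). *)
Definition Vars n (T : 'I_n -> nat) := {j : 'I_n & 'I_(T j)}.

Definition xval {n} {T : 'I_n -> nat} (X : {ffun Vars n T -> bool}) (j : 'I_n) (t : nat)
  : bool :=
  if @insub nat (fun x => x < T j) 'I_(T j) (t %% T j) is Some o
  then X (Tagged (fun j => 'I_(T j)) o) else false.

(* M_i (0-based block i: variables j with l i <= j < l (i+1), 0-based j). *)
Definition Mblk n (T : 'I_n -> nat) (l q : nat -> nat) (i : nat) : nat :=
  q i * \big[lcmn/1%N]_(j < n | (l i <= j) && (j < l i.+1)) T j.

Definition tau n (T : 'I_n -> nat) (l q : nat -> nat) (s c : nat) : nat :=
  \sum_(i < s) bitn i c * Mblk n T l q i.

Definition PC n (T : 'I_n -> nat) (l q : nat -> nat) (s : nat)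
  (f : {ffun 'I_n -> bool} -> bool) (t : nat) (X : {ffun Vars n T -> bool}) : bool :=
  \big[addb/false]_(c < 2 ^ s) f [ffun j => xval X j (t + tau n T l q s c)].

Definition blk (l : nat -> nat) (s j : nat) : nat :=
  find (fun i => j < l i.+1) (iota 0 s).

Definition delbit (i c : nat) : nat := (c %/ 2 ^ i.+1) * 2 ^ i + c %% 2 ^ i.

Definition chi n k (l : nat -> nat) (s c : nat)
  (alpha : {ffun 'I_k -> {ffun 'I_(2 ^ s.-1) -> bool}}) : {ffun 'I_n -> bool} :=
  [ffun j : 'I_n =>
     if @insub nat (fun x => x < k) 'I_k (val j) is Some j'
     then getb (alpha j') (delbit (blk l s j) c) else false].

From HB Require Import structures.
From mathcomp Require Import all_boot all_order all_algebra.
Import GRing.Theory Num.Theory.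

(* Walsh expansion: (-1)^{f y} = sum_beta E(f + phi_beta) (-1)^{beta.y}.  The
   parity check xors f over the 2^s bit vectors read at times t + tau_c; expanding
   every factor and averaging over the independent uniform bits x_j(o) gives
     E(PC) = sum_B prod_c E(f + phi_{B c}),
   over the families B = (beta_c)_c that hit every bit x_j(o) an even number of
   times ("parity-free" families).  The bit x_j(o) is read by the c whose shifts
   t + tau_c are congruent to o modulo T_j.  By Assumption (G) these classes are
   singletons when j >= k, and when j lies in block i they are the pairs of c
   differing only in the bit c_i, i.e. the fibres of the map delbit i.  Hence B is
   parity-free iff its columns j >= k vanish and every column j < k factors
   through delbit (blk j), that is iff B = chi(., alpha) for a unique alpha; the
   theorem follows by reindexing the sum over alpha. *)

Section WalshAnalysis.

Local Open Scope ring_scope.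

Lemma sign_bigxor (I : finType) (P : pred I) (F : I -> bool) :
  (-1) ^+ (\big[addb/false]_(i | P i) F i) = \prod_(i | P i) (-1) ^+ F i :> rat.
Proof. by apply: (big_morph (fun b : bool => (-1) ^+ b : rat)); [exact: signr_addb|]. Qed.

Lemma prod_zero_or_two (I : finType) (b : I -> bool) :
  \prod_(i : I) (if b i then 0 else 2) = if [forall i, ~~ b i] then 2 ^+ #|I| else 0 :> rat.
Proof.
case: ifP => [/forallP b0|/negbT].
  by rewrite -prodr_const; apply: eq_bigr => i _; rewrite (negbTE (b0 i)).
by rewrite negb_forall => /existsP [i]; rewrite negbK => bi; rewrite (bigD1 i) //= bi mul0r.
Qed.

Lemma bias_ext {I : finType} {h h' : {ffun I -> bool} -> bool} : h =1 h' -> bias h = bias h'.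
Proof. by move=> hh'; rewrite /bias; congr (_ * _); apply: eq_bigr => x _; rewrite hh'. Qed.

Lemma pow2r_neq0 m : (2 ^+ m : rat) != 0.
Proof. by rewrite expf_neq0 // pnatr_eq0. Qed.

Lemma sum_sign_linf n (x y : {ffun 'I_n -> bool}) :
  \sum_(be : {ffun 'I_n -> bool}) (-1) ^+ (linf n be x (+) linf n be y)
  = if x == y then 2 ^+ n else 0 :> rat.
Proof.
have coordwise be : (-1) ^+ (linf n be x (+) linf n be y) =
    \prod_(i < n) (-1) ^+ ((be i && x i) (+) (be i && y i)) :> rat.
  rewrite signr_addb /linf !sign_bigxor -big_split /=.
  by apply: eq_bigr => i _; rewrite signr_addb.
rewrite (eq_bigr _ (fun be _ => coordwise be)).
rewrite -(bigA_distr_bigA (fun i b => (-1) ^+ ((b && x i) (+) (b && y i)) : rat)).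
have sum_bit (i : 'I_n) : \sum_(b : bool) (-1) ^+ ((b && x i) (+) (b && y i))
    = (if x i != y i then 0 else 2) :> rat.
  by rewrite big_bool /=; case: (x i); case: (y i).
rewrite (eq_bigr _ (fun i _ => sum_bit i)) prod_zero_or_two card_ord.
congr (if _ then _ else _).
apply/forallP/eqP => [xy|->]; last by move=> i; rewrite eqxx.
by apply/ffunP => i; move: (xy i); rewrite negbK => /eqP.
Qed.

Lemma walsh_expansion n (g : {ffun 'I_n -> bool} -> bool) (y : {ffun 'I_n -> bool}) :
  (-1) ^+ (g y) = \sum_(be : {ffun 'I_n -> bool})
     bias (fun x => g x (+) linf n be x) * (-1) ^+ (linf n be y) :> rat.
Proof.
rewrite /bias card_ord.
under eq_bigr do rewrite -mulrA mulr_suml.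
rewrite -mulr_sumr exchange_big /=.
under [X in _ = _ * X]eq_bigr do
  (under eq_bigr do rewrite signr_addb -mulrA -signr_addb; rewrite -mulr_sumr sum_sign_linf).
rewrite (bigD1 y) //= eqxx big1 ?addr0; last by move=> x /negbTE ->; rewrite mulr0.
by rewrite mulrCA mulVf ?pow2r_neq0 ?mulr1.
Qed.

(* The c-th copy of f reads the variable pos c j in coordinate j; the parity of a
   family B = (beta_c)_c at a variable v is the xor of the coefficients B c j
   over the coordinates (c, j) reading v. *)
Definition parity {V C : finType} {n} (pos : C -> 'I_n -> V)
  (B : {ffun C -> {ffun 'I_n -> bool}}) (v : V) : bool :=
  \big[addb/false]_(p : C * 'I_n | pos p.1 p.2 == v) B p.1 p.2.

Lemma sum_sign_positions (V C : finType) n (pos : C -> 'I_n -> V)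
    (B : {ffun C -> {ffun 'I_n -> bool}}) :
  \sum_(X : {ffun V -> bool}) \prod_(c : C) (-1) ^+ linf n (B c) [ffun j => X (pos c j)]
  = if [forall v, ~~ parity pos B v] then 2 ^+ #|V| else 0 :> rat.
Proof.
have by_variable (X : {ffun V -> bool}) :
  \prod_(c : C) (-1) ^+ linf n (B c) [ffun j => X (pos c j)] =
  \prod_(v : V) \prod_(p : C * 'I_n | pos p.1 p.2 == v) (-1) ^+ (B p.1 p.2 && X v) :> rat.
  under eq_bigr do rewrite /linf sign_bigxor.
  rewrite pair_big /= (partition_big (fun p : C * 'I_n => pos p.1 p.2) xpredT) //=.
  by apply: eq_bigr => v _; apply: eq_bigr => p /eqP <-; rewrite ffunE.
rewrite (eq_bigr _ (fun X _ => by_variable X)).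
rewrite -(bigA_distr_bigA (fun v b =>
  \prod_(p : C * 'I_n | pos p.1 p.2 == v) (-1) ^+ (B p.1 p.2 && b) : rat)).
rewrite -prod_zero_or_two; apply: eq_bigr => v _.
rewrite big_bool /=.
under eq_bigr do rewrite andbT.
under [X in _ + X]eq_bigr do rewrite andbF expr0.
by rewrite big1_eq -sign_bigxor /parity; case: (\big[addb/false]_(p | _) _).
Qed.

Lemma bias_xor_positions (V C : finType) n (pos : C -> 'I_n -> V)
    (f : {ffun 'I_n -> bool} -> bool) :
  bias (fun X : {ffun V -> bool} => \big[addb/false]_(c : C) f [ffun j => X (pos c j)])
  = \sum_(B : {ffun C -> {ffun 'I_n -> bool}} | [forall v, ~~ parity pos B v])
      \prod_(c : C) bias (fun x => f x (+) linf n (B c) x).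
Proof.
have expand (X : {ffun V -> bool}) :
  (-1) ^+ (\big[addb/false]_(c : C) f [ffun j => X (pos c j)]) =
  \sum_(B : {ffun C -> {ffun 'I_n -> bool}})
    (\prod_(c : C) bias (fun x => f x (+) linf n (B c) x)) *
    \prod_(c : C) (-1) ^+ linf n (B c) [ffun j => X (pos c j)] :> rat.
  rewrite sign_bigxor (eq_bigr _ (fun c _ => @walsh_expansion n f [ffun j => X (pos c j)])).
  rewrite (bigA_distr_bigA (fun c be =>
    bias (fun x => f x (+) linf n be x) * (-1) ^+ linf n be [ffun j => X (pos c j)])).
  by apply: eq_bigr => B _; rewrite big_split.
rewrite {1}/bias (eq_bigr _ (fun X _ => expand X)) exchange_big /= mulr_sumr.
rewrite [RHS]big_mkcond; apply: eq_bigr => B _.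
rewrite -mulr_sumr sum_sign_positions.
case: ifP => _; last by rewrite !mulr0.
by rewrite mulrCA mulVf ?pow2r_neq0 ?mulr1.
Qed.

End WalshAnalysis.

Definition insbit (i : nat) (b : bool) (m : nat) : nat :=
  (m %/ 2 ^ i) * 2 ^ i.+1 + b * 2 ^ i + m %% 2 ^ i.

Lemma pow2_gt0 i : 0 < 2 ^ i. Proof. by rewrite expn_gt0. Qed.

Lemma insbit_divmod i b m :
  insbit i b m %/ 2 ^ i = (m %/ 2 ^ i) * 2 + b /\ insbit i b m %% 2 ^ i = m %% 2 ^ i.
Proof.
have -> : insbit i b m = ((m %/ 2 ^ i) * 2 + b) * 2 ^ i + m %% 2 ^ i.
  by rewrite /insbit expnSr mulnDl -mulnA (mulnC 2).
rewrite modnMDl modn_mod divnMDl ?pow2_gt0 //.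
by rewrite (divn_small (ltn_pmod _ (pow2_gt0 i))) addn0.
Qed.

Lemma bitn_insbit i b m : bitn i (insbit i b m) = b.
Proof. by rewrite /bitn (proj1 (insbit_divmod i b m)) oddD oddM andbF; case: b. Qed.

Lemma delbit_insbit i b m : delbit i (insbit i b m) = m.
Proof.
have [D M] := insbit_divmod i b m.
rewrite /delbit expnSr divnMA D M divnMDl // (@divn_small b) ?addn0 -?divn_eq //.
by case: (b).
Qed.

Lemma delbit_divmod i c :
  delbit i c %/ 2 ^ i = c %/ 2 ^ i.+1 /\ delbit i c %% 2 ^ i = c %% 2 ^ i.
Proof.
rewrite /delbit modnMDl modn_mod divnMDl ?pow2_gt0 //.
by rewrite (divn_small (ltn_pmod _ (pow2_gt0 i))) addn0.
Qed.

Lemma insbit_delbit i c : insbit i (bitn i c) (delbit i c) = c.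
Proof.
rewrite /insbit; have [-> ->] := delbit_divmod i c.
rewrite /bitn expnSr divnMA [RHS](divn_eq c (2 ^ i)) [in RHS](divn_eq (c %/ 2 ^ i) 2).
by rewrite modn2 mulnDl -mulnA (mulnC 2).
Qed.

Lemma bitn_delbit {i i' c c'} : i' != i -> delbit i c = delbit i c' -> bitn i' c = bitn i' c'.
Proof.
move=> ne E; have [EH EL] := delbit_divmod i c; have [EH' EL'] := delbit_divmod i c'.
rewrite E EH' in EH; rewrite E EL' in EL.
case: (ltngtP i' i) ne => // lt_i'i _.
- have Ep : 2 ^ i = 2 ^ (i - i') * 2 ^ i' by rewrite -expnD subnK // ltnW.
  have low x : bitn i' x = bitn i' (x %% 2 ^ i).
    rewrite /bitn {1}(divn_eq x (2 ^ i)) {2}Ep mulnA divnMDl ?pow2_gt0 //.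
    by rewrite oddD oddM oddX subn_eq0 leqNgt lt_i'i andbF.
  by rewrite low -EL -low.
- have Ep : 2 ^ i' = 2 ^ i.+1 * 2 ^ (i' - i.+1) by rewrite -expnD subnKC.
  by rewrite /bitn Ep !divnMA EH.
Qed.

Lemma delbit_lt {i s c} : i < s -> c < 2 ^ s -> delbit i c < 2 ^ s.-1.
Proof.
case: s => [//|s] /= le_is lt_c; have {}le_is : i <= s := le_is.
have Ep : 2 ^ s.+1 = 2 ^ (s - i) * 2 ^ i.+1 by rewrite -expnD addnS subnK.
have hi : c %/ 2 ^ i.+1 < 2 ^ (s - i) by rewrite ltn_divLR ?pow2_gt0 // -Ep.
apply: (@leq_trans ((c %/ 2 ^ i.+1).+1 * 2 ^ i)).
  by rewrite /delbit mulSn [X in _ < X]addnC ltn_add2l ltn_pmod ?pow2_gt0.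
by rewrite -[in X in _ <= X](subnK le_is) expnD leq_mul.
Qed.

Lemma insbit_lt {i s} b {m} : i < s -> m < 2 ^ s.-1 -> insbit i b m < 2 ^ s.
Proof.
case: s => [//|s] /= le_is lt_m; have {}le_is : i <= s := le_is.
have Ep : 2 ^ s = 2 ^ (s - i) * 2 ^ i by rewrite -expnD subnK.
have hi : m %/ 2 ^ i < 2 ^ (s - i) by rewrite ltn_divLR ?pow2_gt0 // -Ep.
rewrite /insbit -addnA.
apply: (@leq_trans ((m %/ 2 ^ i).+1 * 2 ^ i.+1)).
  rewrite mulSn [X in _ < X]addnC ltn_add2l expnS mul2n -addnn -addnS.
  by apply: leq_add; [case: b; rewrite ?mul1n ?mul0n | exact: ltn_pmod (pow2_gt0 i)].
by rewrite -[in X in _ <= X](subnK le_is) -addnS expnD leq_mul.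
Qed.

Lemma delbit_fiber {s i} (c : 'I_(2 ^ s)) : i < s ->
  exists c0 c1 : 'I_(2 ^ s), [/\ c0 != c1,
    delbit i c0 = delbit i c, delbit i c1 = delbit i c &
    forall c' : 'I_(2 ^ s), (delbit i c' == delbit i c) = (c' == c0) || (c' == c1)].
Proof.
move=> lt_is; have lt_m := delbit_lt lt_is (ltn_ord c).
exists (Ordinal (insbit_lt false lt_is lt_m)), (Ordinal (insbit_lt true lt_is lt_m)).
split; rewrite ?delbit_insbit //.
  by apply/eqP => /(congr1 (bitn i \o val)) /=; rewrite !bitn_insbit.
move=> c'; apply/eqP/idP => [E|/orP[] /eqP -> /=]; rewrite ?delbit_insbit //.
by rewrite -!val_eqE /= -(insbit_delbit i c') E; case: (bitn i c'); rewrite eqxx ?orbT.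
Qed.

Lemma bigxor_pair (I : finType) (c0 c1 : I) (F : I -> bool) : c0 != c1 ->
  \big[addb/false]_(c | (c == c0) || (c == c1)) F c = F c0 (+) F c1.
Proof.
move=> ne; rewrite (bigD1 c0) ?eqxx //= (bigD1 c1) /=; last by rewrite eqxx orbT eq_sym.
by rewrite big_pred0 ?addbF // => c; case: (c == c0); case: (c == c1).
Qed.

Lemma fiber_xor0P {s i} (g : 'I_(2 ^ s) -> bool) : i < s ->
  (forall c : 'I_(2 ^ s),
     ~~ \big[addb/false]_(c' : 'I_(2 ^ s) | delbit i c' == delbit i c) g c') <->
  (forall c c' : 'I_(2 ^ s), delbit i c' = delbit i c -> g c' = g c).
Proof.
move=> lt_is; split=> [xor0 c c' Ec'|gconst c].
- have [c0 [c1 [ne _ _ fib]]] := delbit_fiber c lt_is.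
  have g01 : g c0 = g c1.
    by move: (xor0 c); rewrite (eq_bigl _ _ fib) bigxor_pair //; case: (g c0); case: (g c1).
  have in_pair (x : 'I_(2 ^ s)) : delbit i x = delbit i c -> g x = g c0.
    by move=> Ex; have := fib x; rewrite Ex eqxx => /esym/orP[]/eqP->.
  by rewrite (in_pair c') // (in_pair c).
- have [c0 [c1 [ne E0 E1 fib]]] := delbit_fiber c lt_is.
  by rewrite (eq_bigl _ _ fib) bigxor_pair // (gconst c c0) // (gconst c c1) // addbb.
Qed.

Lemma blk_props (l : nat -> nat) s j : l 0 = 0 -> j < l s ->
  [/\ blk l s j < s, l (blk l s j) <= j & j < l (blk l s j).+1].
Proof.
move=> l0 lt_js; have s_gt0 : 0 < s by case: s lt_js => //; rewrite l0.
have has_blk : has (fun i => j < l i.+1) (iota 0 s).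
  apply/hasP; exists s.-1; first by rewrite mem_iota add0n prednK ?leqnn.
  by rewrite prednK.
have lt_blk : blk l s j < s by move: has_blk; rewrite has_find size_iota.
split => //; last by have := nth_find 0 has_blk; rewrite nth_iota ?add0n.
rewrite /blk; case E: (find _ _) => [|i]; first by rewrite l0.
have := @before_find _ 0 (fun i => j < l i.+1) (iota 0 s) i.
rewrite E ltnSn nth_iota ?add0n => [lt_ji|]; first by rewrite leqNgt lt_ji.
by rewrite -E ltnW // -(size_iota 0 s) -has_find.
Qed.

Lemma T_dvd_Mblk n (T : 'I_n -> nat) l q i (j : 'I_n) :
  l i <= j -> j < l i.+1 -> T j %| Mblk n T l q i.
Proof. by move=> lo hi; apply/dvdn_mull/(biglcmn_sup j); rewrite ?lo ?hi. Qed.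

Lemma tau_cong n T l q s i d c c' : d %| Mblk n T l q i ->
  delbit i c = delbit i c' -> tau n T l q s c = tau n T l q s c' %[mod d].
Proof.
move=> dvd_dM E; rewrite /tau -modn_summ -[in RHS]modn_summ; congr (_ %% d).
apply: eq_bigr => i' _; case: (eqVneq (val i') i) => [->|ne].
  by rewrite !(eqP (dvdn_mull _ dvd_dM)).
by rewrite (bitn_delbit ne E).
Qed.

Lemma cong_iff_delbit (tauf : nat -> nat) s i d : i < s ->
  (forall c c', delbit i c = delbit i c' -> tauf c = tauf c' %[mod d]) ->
  (forall c c', c < 2 ^ s -> c' < 2 ^ s -> ~~ bitn i c -> ~~ bitn i c' ->
       tauf c = tauf c' %[mod d] -> c = c') ->
  forall c c', c < 2 ^ s -> c' < 2 ^ s ->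
  (tauf c == tauf c' %[mod d]) = (delbit i c == delbit i c').
Proof.
move=> lt_is fib_cong sep c c' lt_c lt_c'.
apply/eqP/eqP => [E|]; last exact: fib_cong.
pose c0 := insbit i false (delbit i c); pose c0' := insbit i false (delbit i c').
have [D0 D0'] : delbit i c0 = delbit i c /\ delbit i c0' = delbit i c'.
  by rewrite !delbit_insbit.
suff E0 : c0 = c0' by rewrite -D0 E0 D0'.
apply: sep; rewrite ?bitn_insbit ?(insbit_lt false lt_is (delbit_lt lt_is _)) //.
by rewrite (fib_cong _ _ D0) E -(fib_cong _ _ D0').
Qed.

Lemma getb_lt {N} (g : {ffun 'I_N -> bool}) {m} (lt_mN : m < N) :
  getb g m = g (Ordinal lt_mN).
Proof. by rewrite /getb insubT. Qed.

Lemma chi_lt {n k l s c alpha} {j : 'I_n} (lt_jk : j < k) :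
  chi n k l s c alpha j = getb (alpha (Ordinal lt_jk)) (delbit (blk l s j) c).
Proof. by rewrite /chi ffunE insubT. Qed.

Lemma chi_ge n k l s c alpha (j : 'I_n) : k <= j -> chi n k l s c alpha j = false.
Proof. by move=> le_kj; rewrite /chi ffunE insubN // -leqNgt. Qed.

Section BlockStructure.

Context {n k s : nat} {T : 'I_n -> nat} {l q : nat -> nat}.
Hypotheses (l0 : l 0 = 0) (lsk : l s = k) (le_kn : k <= n).
Hypothesis tail_sep : forall j : 'I_n, k <= j -> forall c c', c < 2 ^ s -> c' < 2 ^ s ->
  tau n T l q s c = tau n T l q s c' %[mod T j] -> c = c'.
Hypothesis block_sep : forall i, i < s -> forall j : 'I_n, l i <= j -> j < l i.+1 ->
  forall c c', c < 2 ^ s -> c' < 2 ^ s -> ~~ bitn i c -> ~~ bitn i c' ->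
  tau n T l q s c = tau n T l q s c' %[mod T j] -> c = c'.

Local Notation tauf := (tau n T l q s).
Local Notation blkj j := (blk l s j).

Lemma blk_of {j : nat} : j < k -> [/\ blkj j < s, l (blkj j) <= j & j < l (blkj j).+1].
Proof. by move=> lt_jk; apply: blk_props; rewrite ?lsk. Qed.

Lemma cong_blk {j : 'I_n} : j < k -> forall c c' : 'I_(2 ^ s),
  (tauf c' == tauf c %[mod T j]) = (delbit (blkj j) c' == delbit (blkj j) c).
Proof.
move=> lt_jk c c'; have [lt_is lo hi] := blk_of lt_jk.
apply: (@cong_iff_delbit tauf s _ (T j) lt_is _ _ c' c (ltn_ord c') (ltn_ord c)).
  by move=> x y; apply: tau_cong; exact: T_dvd_Mblk.
exact: block_sep.
Qed.

Lemma cong_tail {j : 'I_n} : k <= j -> forall c c' : 'I_(2 ^ s),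
  (tauf c' == tauf c %[mod T j]) = (c' == c).
Proof.
move=> le_kj c c'; apply/eqP/eqP => [E|-> //].
exact: val_inj (tail_sep j le_kj c' c (ltn_ord c') (ltn_ord c) E).
Qed.

Definition chis (alpha : {ffun 'I_k -> {ffun 'I_(2 ^ s.-1) -> bool}}) :
  {ffun 'I_(2 ^ s) -> {ffun 'I_n -> bool}} := [ffun c : 'I_(2 ^ s) => chi n k l s c alpha].

Lemma chisE alpha c : chis alpha c = chi n k l s c alpha.
Proof. by rewrite ffunE. Qed.

Definition blockwise (B : {ffun 'I_(2 ^ s) -> {ffun 'I_n -> bool}}) : Prop :=
  (forall j : 'I_n, j < k -> forall c c' : 'I_(2 ^ s),
     delbit (blkj j) c' = delbit (blkj j) c -> B c' j = B c j)
  /\ (forall j : 'I_n, k <= j -> forall c, B c j = false).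

Lemma class_xor0P (B : {ffun 'I_(2 ^ s) -> {ffun 'I_n -> bool}}) :
  reflect (blockwise B) [forall j : 'I_n, forall c : 'I_(2 ^ s),
     ~~ \big[addb/false]_(c' : 'I_(2 ^ s) | tauf c' == tauf c %[mod T j]) B c' j].
Proof.
apply: (iffP forallP) => [xor0|[cols tail] j]; last apply/forallP => c.
- split=> [j lt_jk|j le_kj].
  + have [lt_is _ _] := blk_of lt_jk.
    apply/(fiber_xor0P (fun c => B c j) lt_is) => c.
    by rewrite -(eq_bigl _ _ (cong_blk lt_jk c)); exact: (forallP (xor0 j)).
  + move=> c; have := forallP (xor0 j) c.
    by rewrite (eq_bigl _ _ (cong_tail le_kj c)) big_pred1_eq => /negbTE.
- case: (ltnP j k) => [lt_jk|le_kj].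
  + have [lt_is _ _] := blk_of lt_jk.
    rewrite (eq_bigl _ _ (cong_blk lt_jk c)).
    exact: (fiber_xor0P (fun c => B c j) lt_is).2 (cols j lt_jk) c.
  + by rewrite big1 // => c' _; rewrite tail.
Qed.

Lemma chis_image (B : {ffun 'I_(2 ^ s) -> {ffun 'I_n -> bool}}) :
  blockwise B <-> exists alpha, B = chis alpha.
Proof.
split=> [[cols tail]|[alpha ->]]; last first.
  split=> [j lt_jk c c' E|j le_kj c]; last by rewrite chisE chi_ge.
  by rewrite !chisE !(chi_lt lt_jk) E.
pose alpha := [ffun j' : 'I_k => [ffun m : 'I_(2 ^ s.-1) =>
  getb [ffun c => B c (widen_ord le_kn j')] (insbit (blkj j') false m)]].
exists alpha; apply/ffunP => c; apply/ffunP => j; rewrite chisE.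
case: (ltnP j k) => [lt_jk|le_kj]; last by rewrite chi_ge ?tail.
have [lt_is _ _] := blk_of lt_jk.
have lt_m := delbit_lt lt_is (ltn_ord c).
have lt_c0 := insbit_lt false lt_is lt_m.
rewrite (chi_lt lt_jk) (getb_lt _ lt_m) !ffunE /= (getb_lt _ lt_c0) ffunE.
have -> : widen_ord le_kn (Ordinal lt_jk) = j by apply: val_inj.
by rewrite (cols j lt_jk c (Ordinal lt_c0)) //= delbit_insbit.
Qed.

(* alpha is recovered from chi(., alpha) on the indices with bit blk j clear. *)
Lemma chis_inj : injective chis.
Proof.
move=> alpha alpha' E; apply/ffunP => j'; apply/ffunP => m.
have lt_jk : widen_ord le_kn j' < k by rewrite /= ltn_ord.
have [lt_is _ _] := blk_of lt_jk.
pose c := Ordinal (insbit_lt false lt_is (ltn_ord m)).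
have := congr1 (fun B : {ffun 'I_(2 ^ s) -> {ffun 'I_n -> bool}} =>
  B c (widen_ord le_kn j')) E.
rewrite !chisE !(chi_lt lt_jk) /= delbit_insbit !(getb_lt _ (ltn_ord m)).
have -> : Ordinal lt_jk = j' by apply: val_inj.
by have -> : Ordinal (ltn_ord m) = m by apply: val_inj.
Qed.

End BlockStructure.

Section Slots.

Context {n : nat} {T : 'I_n -> nat}.
Hypothesis T_gt0 : forall j, 0 < T j.

Definition slot (u : nat) (j : 'I_n) : Vars n T :=
  Tagged (fun j => 'I_(T j)) (Ordinal (ltn_pmod u (T_gt0 j))).

Lemma xval_slot (X : {ffun Vars n T -> bool}) j u : xval X j u = X (slot u j).
Proof.
rewrite /xval; case: insubP => [o _ def_o|]; last by rewrite ltn_pmod.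
by congr (X (Tagged _ _)); apply: val_inj; rewrite /= def_o.
Qed.

Lemma PC_slots l q s f t (X : {ffun Vars n T -> bool}) :
  PC n T l q s f t X =
  \big[addb/false]_(c < 2 ^ s) f [ffun j => X (slot (t + tau n T l q s c) j)].
Proof. by apply: eq_bigr => c _; congr f; apply/ffunP => j; rewrite !ffunE xval_slot. Qed.

Lemma parity_slot (C : finType) (u : C -> nat) (B : {ffun C -> {ffun 'I_n -> bool}})
    (j0 : 'I_n) (o : 'I_(T j0)) :
  parity (fun c => slot (u c)) B (Tagged (fun j => 'I_(T j)) o) =
  \big[addb/false]_(c | u c %% T j0 == o) B c j0.
Proof.
rewrite /parity -(pair_big_dep xpredT
  (fun c j => slot (u c) j == Tagged (fun j => 'I_(T j)) o) (fun c j => B c j)) /=.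
rewrite [RHS]big_mkcond; apply: eq_bigr => c _.
have slot_eq j :
    (slot (u c) j == Tagged (fun j => 'I_(T j)) o) = (j == j0) && (u c %% T j0 == o).
  case: (eqVneq j j0) => [->|ne]; first by rewrite eq_Tagged -val_eqE.
  by apply/eqP => /(congr1 tag) /= Ej; rewrite Ej eqxx in ne.
rewrite (eq_bigl _ _ slot_eq); case: (u c %% T j0 == o).
- by rewrite (eq_bigl (fun j => j == j0)) ?big_pred1_eq // => j; rewrite andbT.
- by rewrite big_pred0 // => j; rewrite andbF.
Qed.

Lemma parity_free_slots (C : finType) (t : nat) (w : C -> nat)
    (B : {ffun C -> {ffun 'I_n -> bool}}) :
  [forall v, ~~ parity (fun c => slot (t + w c)) B v] =
  [forall j : 'I_n, forall c : C,
     ~~ \big[addb/false]_(c' | w c' == w c %[mod T j]) B c' j].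
Proof.
apply/forallP/forallP => [no_par j|xor0 [j0 o]].
- apply/forallP => c; have := no_par (slot (t + w c) j).
  by rewrite parity_slot; under eq_bigl do rewrite eqn_modDl.
- rewrite parity_slot.
  case: (pickP (fun c => (t + w c) %% T j0 == o)) => [c def_o|none]; last by rewrite big_pred0.
  have cls c' : ((t + w c') %% T j0 == o) = (w c' == w c %[mod T j0]).
    by rewrite -(eqP def_o) eqn_modDl.
  by rewrite (eq_bigl _ _ cls); exact: (forallP (xor0 j0) c).
Qed.

End Slots.

Local Open Scope ring_scope.

Theorem theorem3 (n k s : nat) (f : {ffun 'I_n -> bool} -> bool)
  (T : 'I_n -> nat) (l q : nat -> nat) (t : nat) :
  (0 < s)%N ->
  (forall j, 0 < T j)%N ->
  l 0%N = 0%N ->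
  (forall i, i < s -> l i < l i.+1)%N ->
  l s = k -> (k <= n)%N ->
  (forall i, i < s -> 0 < q i)%N ->
  (* Assumption (G)(i) *)
  (forall j : 'I_n, (k <= j)%N -> forall c c', (c < 2 ^ s)%N -> (c' < 2 ^ s)%N ->
     tau n T l q s c = tau n T l q s c' %[mod T j] -> c = c') ->
  (* Assumption (G)(ii) *)
  (forall i, (i < s)%N -> forall j : 'I_n, (l i <= j)%N -> (j < l i.+1)%N ->
     forall c c', (c < 2 ^ s)%N -> (c' < 2 ^ s)%N -> ~~ bitn i c -> ~~ bitn i c' ->
     tau n T l q s c = tau n T l q s c' %[mod T j] -> c = c') ->
  bias (PC n T l q s f t) =
  \sum_(alpha : {ffun 'I_k -> {ffun 'I_(2 ^ s.-1) -> bool}})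
     \prod_(c < 2 ^ s) bias (fun x => f x (+) linf n (chi n k l s c alpha) x).
Proof.
move=> _ T_gt0 l0 _ lsk le_kn _ tail_sep block_sep.
have xor0P := class_xor0P l0 lsk tail_sep block_sep.
have imageP := chis_image l0 lsk le_kn.
rewrite (bias_ext (PC_slots T_gt0 l q s f t)) bias_xor_positions.
(* By (G), these families are exactly the chi(., alpha). *)
have parity_free_image B :
    [forall v, ~~ parity (fun c : 'I_(2 ^ s) => slot T_gt0 (t + tau n T l q s c)) B v]
    = (B \in [set @chis n k s l alpha | alpha in [set: _]]).
  rewrite parity_free_slots; apply/idP/imsetP => [/xor0P/imageP [alpha ->]|[alpha _ ->]].
    by exists alpha.
  by apply/xor0P/imageP; exists alpha.
rewrite (eq_bigl _ _ parity_free_image) big_imset; last first.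
  by move=> a a' _ _ /(chis_inj l0 lsk le_kn).
by apply: eq_big => [alpha|alpha _]; [rewrite in_setT | apply: eq_bigr => c _; rewrite chisE].
Qed.
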